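(* Any (randomized) voting rule taking top-$t$ preference profiles as input with constant metric distortion has utilitarian distortion $\Omega\!\left(\max\!\left(\frac{m\sqrt m}{t\sqrt t},\sqrt m\right)\right)$.
   Context: Setting: $n$ agents, $m$ alternatives; each agent has an underlying strict ranking, but the rule only receives each agent's ordered list of her top $t$ alternatives (a top-$t$ profile $\vec\sigma_t$) and outputs a distribution over alternatives. A metric (pseudometric on agents and alternatives) or a unit-sum utility profile is consistent with $\vec\sigma_t$ if it is consistent with some full ranking profile extending $\vec\sigma_t$, where $d$ is consistent with full $\vec\sigma$ if $X\succ_iY\Rightarrow d(i,X)\le d(i,Y)$ and $\vec u$ if $X\succ_iY\Rightarrow u_i(X)\ge u_i(Y)$. $\mathrm{SC}(X,d)=\sum_id(i,X)$, $\mathrm{SW}(X,\vec u)=\sum_iu_i(X)$ with $u_i\ge0$, $\sum_Xu_i(X)=1$. Metric distortion: worst case over top-$t$ profiles and consistent $d$ of $\mathbb E[\mathrm{SC}(\text{output},d)]/\min_X\mathrm{SC}(X,d)$; utilitarian distortion: worst case over top-$t$ profiles and consistent $\vec u$ of $\max_X\mathrm{SW}(X,\vec u)/\mathbb E[\mathrm{SW}(\text{output},\vec u)]$. *)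

From HB Require Import structures.
From mathcomp Require Import all_boot all_order all_algebra all_fingroup.
From mathcomp Require Import reals.
Set Implicit Arguments. Unset Strict Implicit. Unset Printing Implicit Defensive.
Import Order.TTheory GRing.Theory Num.Theory.
Local Open Scope ring_scope.

Section Voting.
Variable R : realType.

(* Agents are 'I_n, alternatives are 'I_m.  A full ranking of agent i is a
   permutation sigma i of 'I_m: (sigma i) k is the alternative in position k
   (position 0 = top). *)
Definition full_profile (n m : nat) := {ffun 'I_n -> {perm 'I_m}}.

Definition prefers n m (s : full_profile n m) (i : 'I_n) (X Y : 'I_m) : bool :=
  (((s i)^-1)%g X < ((s i)^-1)%g Y)%N.

Definition top_profile n m (t : nat) (s : full_profile n m) : {ffun 'I_n -> seq 'I_m} :=
  [ffun i => [seq s i k | k <- take t (enum 'I_m)]].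

Definition rule (m : nat) := forall n : nat, {ffun 'I_n -> seq 'I_m} -> 'I_m -> R.

Definition is_distribution m (p : 'I_m -> R) : Prop :=
  (forall X, 0 <= p X) /\ \sum_(X < m) p X = 1.

Definition is_rule m (t : nat) (f : rule m) : Prop :=
  forall n (s : full_profile n m), is_distribution (f n (top_profile t s)).

Definition pseudometric (T : Type) (d : T -> T -> R) : Prop :=
  (forall x, d x x = 0) /\ (forall x y, d x y = d y x) /\
  (forall x y z, d x z <= d x y + d y z).

Definition metric_consistent n m (s : full_profile n m)
    (d : 'I_n + 'I_m -> 'I_n + 'I_m -> R) : Prop :=
  forall i X Y, prefers s i X Y -> d (inl i) (inr X) <= d (inl i) (inr Y).

Definition SC n m (d : 'I_n + 'I_m -> 'I_n + 'I_m -> R) (X : 'I_m) : R :=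
  \sum_(i < n) d (inl i) (inr X).

Definition unit_sum n m (u : 'I_n -> 'I_m -> R) : Prop :=
  (forall i X, 0 <= u i X) /\ (forall i, \sum_(X < m) u i X = 1).

Definition utility_consistent n m (s : full_profile n m) (u : 'I_n -> 'I_m -> R) : Prop :=
  forall i X Y, prefers s i X Y -> u i Y <= u i X.

Definition SW n m (u : 'I_n -> 'I_m -> R) (X : 'I_m) : R := \sum_(i < n) u i X.

Definition expect m (p : 'I_m -> R) (g : 'I_m -> R) : R := \sum_(X < m) p X * g X.

(* Metric distortion of f is at most C: on every top-t profile (every full
   profile extending it) and every consistent pseudometric,
   E[SC(output)] <= C * min_X SC(X). *)
Definition metric_distortion_le m t (f : rule m) (C : R) : Prop :=
  forall n (s : full_profile n m) (d : 'I_n + 'I_m -> 'I_n + 'I_m -> R),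
    pseudometric d -> metric_consistent s d ->
    forall X, expect (f n (top_profile t s)) (SC d) <= C * SC d X.

Definition util_distortion_ge m t (f : rule m) (D : R) : Prop :=
  exists n (s : full_profile n m) (u : 'I_n -> 'I_m -> R),
    (0 < n)%N /\ unit_sum u /\ utility_consistent s u /\
    exists X, D * expect (f n (top_profile t s)) (SW u) <= SW u X.

End Voting.

From HB Require Import structures.
From mathcomp Require Import all_boot all_order all_algebra all_fingroup.
From mathcomp Require Import reals.
From mathcomp Require Import zify ring lra.
Import Order.TTheory GRing.Theory Num.Theory.
Set Implicit Arguments. Unset Strict Implicit. Unset Printing Implicit Defensive.

(* Lower bound on the utilitarian distortion of top-t rules with metric
   distortion at most C.  Two regimes, each witnessed by an explicit instance:

   - t^3 <= m^2 (the bound is m sqrt m / (t sqrt t)): about m/(4t) "leader"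
     agents and g ~ sqrt(m/t) times as many "followers" list disjoint blocks
     of t alternatives.  Two cluster pseudometrics consistent with the profile
     force the rule (a) to put no mass outside the listed blocks and (b) to put
     mass at most C/g on the leaders' blocks.  Leaders value a common unlisted
     alternative A*, followers value a long tail, so SW(A* ) ~ m/t while the
     expected welfare is O(C/(g t)).
   - m^2 < t^3 (the bound is sqrt m): the classical k^2-agent instance with
     k ~ sqrt m / 2, which defeats any rule whatsoever. *)

Section TierProfile.
Variables (n m : nat) (P : 'I_n -> seq 'I_m) (key : 'I_n -> 'I_m -> nat).

Definition tier i x : nat := if x \in P i then 0 else (key i x).+1.

Definition tier_le i : rel 'I_m := fun x y => tier i x <= tier i y.

Definition ranking i : seq 'I_m :=
  undup (P i) ++ sort (tier_le i) [seq x <- enum 'I_m | x \notin P i].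

Lemma ranking_uniq i : uniq (ranking i).
Proof.
rewrite /ranking cat_uniq undup_uniq sort_uniq filter_uniq ?enum_uniq //=.
rewrite andbT -all_predC; apply/allP => x.
by rewrite mem_sort mem_filter /= mem_undup => /andP[].
Qed.

Lemma size_ranking i : size (ranking i) = m.
Proof.
rewrite -[RHS](size_enum_ord m); apply: perm_size; apply: uniq_perm.
- exact: ranking_uniq.
- exact: enum_uniq.
move=> x; rewrite mem_enum /ranking mem_cat mem_undup mem_sort mem_filter.
by rewrite mem_enum andbT; case: (x \in P i).
Qed.

Definition ranked i (k : 'I_m) : 'I_m := nth k (ranking i) k.

Lemma ranked_inj i : injective (ranked i).
Proof.
move=> k1 k2; rewrite /ranked.
have k2_lt : k2 < size (ranking i) by rewrite size_ranking.
rewrite (set_nth_default k1 k2 k2_lt) => /eqP.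
by rewrite nth_uniq ?ranking_uniq ?size_ranking // => /eqP /val_inj.
Qed.

Definition tier_profile : full_profile n m := [ffun i => perm (@ranked_inj i)].

Lemma ranking_sorted i : sorted (tier_le i) (ranking i).
Proof.
have: sorted (tier_le i) (sort (tier_le i) [seq x <- enum 'I_m | x \notin P i]).
  by apply: sort_sorted => x y; rewrite /tier_le leq_total.
have : {in undup (P i), forall x, tier i x = 0}.
  by move=> x; rewrite /tier mem_undup => ->.
rewrite /ranking; move: (sort _ _) => Q.
elim: (undup (P i)) => [//|x s IH] /= tier0 sortedQ.
have := IH (fun y y_s => tier0 y ltac:(by rewrite inE y_s orbT)) sortedQ.
case: (s ++ _) => [//|y r] /= ->; rewrite andbT.
by rewrite /tier_le (tier0 x (mem_head _ _)).
Qed.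

Lemma tier_profile_prefers i X Y : prefers tier_profile i X Y -> tier i X <= tier i Y.
Proof.
rewrite /prefers /tier_profile ffunE.
set s := perm (@ranked_inj i); set a := (s^-1)%g X; set b := (s^-1)%g Y => ab.
have nthK Z : nth X (ranking i) ((s^-1)%g Z) = Z.
  have := permKV s Z; rewrite permE /ranked => E.
  by rewrite (set_nth_default ((s^-1)%g Z) X) ?size_ranking.
have tr : transitive (tier_le i) by move=> y x z; apply: leq_trans.
have a_lt : val a \in [pred k | k < size (ranking i)] by rewrite inE /= size_ranking ltn_ord.
have b_lt : val b \in [pred k | k < size (ranking i)] by rewrite inE /= size_ranking ltn_ord.
have refl : reflexive (tier_le i) by move=> x; apply: leqnn.
have := @sorted_leq_nth _ (tier_le i) tr refl X (ranking i) (ranking_sorted i) _ _ a_lt b_lt (ltnW ab).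
by rewrite !nthK.
Qed.

End TierProfile.

(* When every list has length at least t, the top-t profile only sees the
   lists: the keys are invisible to the rule. *)
Lemma top_tier_profile n m t (P : 'I_n -> seq 'I_m) key1 key2 :
  (forall i, uniq (P i)) -> (forall i, t <= size (P i)) ->
  top_profile t (tier_profile P key1) = top_profile t (tier_profile P key2).
Proof.
move=> P_uniq P_size; apply/ffunP => i; rewrite !ffunE; apply/eq_in_map => k k_top.
have k_lt : k < t by have := index_ltn k_top; rewrite index_enum_ord.
by rewrite !permE /ranked /ranking undup_id // !nth_cat (leq_trans k_lt (P_size i)).
Qed.

Lemma card_ord_count N (p : pred nat) : #|[pred x : 'I_N | p x]| = count p (iota 0 N).
Proof.
rewrite -sum1_card -sum1_count.
by rewrite -(big_mkord (fun i => p i) (fun _ => 1)) /index_iota subn0.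
Qed.

Lemma count_iota_all (p : pred nat) s l :
  (forall x, s <= x < s + l -> p x) -> count p (iota s l) = l.
Proof.
move=> all_p; rewrite -[RHS](size_iota s l) -count_predT; apply: eq_in_count => x.
by rewrite mem_iota => /all_p ->.
Qed.

Lemma count_iota_none (p : pred nat) s l :
  (forall x, s <= x < s + l -> ~~ p x) -> count p (iota s l) = 0.
Proof.
move=> no_p; rewrite -(count_pred0 (iota s l)); apply: eq_in_count => x.
by rewrite mem_iota => /no_p /negbTE ->.
Qed.

Lemma card_block N t b : 0 < t -> b.+1 * t <= N -> #|[pred x : 'I_N | x %/ t == b]| = t.
Proof.
move=> t_gt0 fits; rewrite (card_ord_count N (fun x => x %/ t == b)).
have -> : N = b * t + (t + (N - b.+1 * t)) by lia.
rewrite iotaD (iotaD (0 + b * t)) !count_cat.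
rewrite (@count_iota_none _ 0) ?(@count_iota_all _ (0 + b * t)).
rewrite ?(@count_iota_none _ (0 + b * t + t)) ?add0n ?addn0 //.
all: move=> x /andP[x_lo x_hi]; have := divn_eq x t; have := ltn_pmod x t_gt0.
all: move: (x %/ t) (x %% t) => q r r_lt x_eq.
- by apply/negP => /eqP q_eq; subst q; nia.
- by apply/eqP; nia.
- by apply/negP => /eqP q_eq; subst q; nia.
Qed.

Lemma card_block_le N t b : 0 < t -> #|[pred x : 'I_N | x %/ t == b]| <= t.
Proof.
move=> t_gt0; have := @card_block (N + b.+1 * t) t b t_gt0 (leq_addl _ _).
rewrite !(card_ord_count _ (fun x => x %/ t == b)) iotaD count_cat => E.
by rewrite -[X in _ <= X]E leq_addr.
Qed.

Lemma card_gt N a : a < N -> #|[pred x : 'I_N | a < x]| = N - a.+1.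
Proof.
move=> a_lt; rewrite (card_ord_count N (fun x => a < x)).
have -> : N = a.+1 + (N - a.+1) by lia.
rewrite iotaD count_cat count_iota_none ?count_iota_all ?add0n; first by lia.
all: by move=> x /andP[x_lo x_hi]; lia.
Qed.

Lemma floor_sqrt_div t m : 0 < t -> exists g, g * g * t <= m < g.+1 * g.+1 * t.
Proof.
move=> t_gt0; elim: m => [|m [g /andP[g_lo g_hi]]]; first by exists 0; lia.
case: (leqP (g.+1 * g.+1 * t) m.+1) => next.
  by exists g.+1; rewrite next /=; nia.
by exists g; rewrite next andbT; lia.
Qed.

Local Open Scope ring_scope.

Section RealSums.
Variable R : realType.

Lemma sum_indicator N (b : pred 'I_N) : \sum_(j < N) ((b j)%:R : R) = #|b|%:R.
Proof.
rewrite (eq_bigr (fun j : 'I_N => if b j then 1 else 0)); last by move=> j _; case: (b j).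
by rewrite -big_mkcond /= sumr_const.
Qed.

Lemma sum_point_mass m (p : 'I_m -> R) (b : 'I_m) : \sum_(x < m) p x * (x == b)%:R = p b.
Proof.
rewrite (eq_bigr (fun x => if x == b then p x else 0)); last first.
  by move=> x _; case: (x == b); rewrite ?mulr1 ?mulr0.
by rewrite -big_mkcond big_pred1_eq.
Qed.

Lemma sum_nat_indicator q (c : nat) : \sum_(k < q) ((c == k)%:R : R) = (c < q)%N%:R.
Proof.
rewrite sum_indicator (card_ord_count q (fun k => c == k)).
rewrite (eq_count (a2 := pred1 c)) => [|k]; last by rewrite /= eq_sym.
by rewrite count_uniq_mem ?iota_uniq // mem_iota add0n; case: (c < q)%N.
Qed.

Lemma sum_injective_le n m (h : 'I_n -> 'I_m) (p : 'I_m -> R) :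
  injective h -> (forall x, 0 <= p x) -> \sum_(i < n) p (h i) <= \sum_(x < m) p x.
Proof.
move=> h_inj p_ge0; rewrite -(big_imset _ (in2W h_inj)) /=.
rewrite [X in _ <= X](bigID (mem [set h x | x in 'I_n])) /=.
by rewrite lerDl sumr_ge0.
Qed.

Lemma expect_SW_ge0 n m (p : 'I_m -> R) (u : 'I_n -> 'I_m -> R) :
  (forall x, 0 <= p x) -> (forall i x, 0 <= u i x) -> 0 <= expect p (SW u).
Proof.
move=> p_ge0 u_ge0; apply: sumr_ge0 => x _; apply: mulr_ge0 => //.
by apply: sumr_ge0.
Qed.

Lemma zero_cost_support m (p c : 'I_m -> R) (C : R) X :
  (forall y, 0 <= p y) -> (forall y, 0 <= c y) -> expect p c <= C * c X ->
  c X = 0 -> forall Y, 0 < c Y -> p Y = 0.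
Proof.
move=> p_ge0 c_ge0 expect_le cX0 Y cY_gt0.
rewrite cX0 mulr0 in expect_le.
have expect0 : \sum_(y < m) p y * c y = 0.
  by apply: le_anti; rewrite expect_le sumr_ge0 // => y _; rewrite mulr_ge0.
have /eqP := psumr_eq0P (fun y _ => mulr_ge0 (p_ge0 y) (c_ge0 y)) expect0 (i := Y) isT.
by rewrite mulf_eq0 (gt_eqF cY_gt0) orbF => /eqP.
Qed.

End RealSums.

Section TierUtility.
Variables (R : realType) (n m : nat) (P : 'I_n -> seq 'I_m).
Variables (key : 'I_n -> 'I_m -> nat) (lvl : 'I_n -> nat).

Definition top_tiers i : pred 'I_m := [pred y | (tier P key i y <= lvl i)%N].

Definition tier_utility i x : R :=
  if x \in top_tiers i then (#|top_tiers i|%:R)^-1 else 0.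

Lemma tier_utility_ge0 i x : 0 <= tier_utility i x.
Proof. by rewrite /tier_utility; case: ifP => // _; rewrite invr_ge0 ler0n. Qed.

Lemma tier_utility_consistent :
  utility_consistent (tier_profile P key) tier_utility.
Proof.
move=> i X Y /tier_profile_prefers XY; rewrite /tier_utility.
case: ifP => Y_top; last exact: tier_utility_ge0.
by rewrite inE (leq_trans XY Y_top).
Qed.

Lemma tier_utility_unit_sum :
  (forall i, exists x, x \in top_tiers i) -> unit_sum tier_utility.
Proof.
move=> nonempty; split; first exact: tier_utility_ge0.
move=> i; rewrite /tier_utility -big_mkcond /= sumr_const -[_ *+ _]mulr_natl mulfV //.
have [x x_top] := nonempty i; rewrite pnatr_eq0 -lt0n; apply/card_gt0P.
by exists x.
Qed.

End TierUtility.

Section ClusterMetric.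
Variables (R : realType) (n m : nat) (ag : 'I_n -> bool) (cl : 'I_m -> bool).

Definition label (z : 'I_n + 'I_m) : bool :=
  match z with inl i => ag i | inr x => cl x end.

Definition cluster_metric (u v : 'I_n + 'I_m) : R := (label u != label v)%:R.

Lemma cluster_metric_pseudometric : pseudometric cluster_metric.
Proof.
rewrite /cluster_metric; split; first by move=> x; rewrite eqxx.
split; first by move=> x y; rewrite eq_sym.
move=> x y z; case: (label x); case: (label y); case: (label z) => /=;
  by rewrite ?add0r ?addr0 ?lexx ?ler01 ?addr_ge0 ?ler01.
Qed.

Variable P : 'I_n -> seq 'I_m.
Hypothesis P_in_cluster : forall i x, x \in P i -> cl x = ag i.

Lemma cluster_metric_consistent :
  metric_consistent (tier_profile P (fun i x => nat_of_bool (cl x != ag i))) cluster_metric.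
Proof.
move=> i X Y /tier_profile_prefers; rewrite /cluster_metric /= /tier.
case X_P: (X \in P i); first by rewrite (P_in_cluster X_P) eqxx ler0n.
case: (Y \in P i) => //.
by case: (cl X); case: (cl Y); case: (ag i); rewrite /= ?ler01 ?lexx.
Qed.

Lemma SC_cluster_metric X : SC cluster_metric X = \sum_(i < n) (ag i != cl X)%:R.
Proof. by []. Qed.

End ClusterMetric.

(* Alternatives are cut into blocks of t
   consecutive integers.  There are q leaders, leader k listing block k, and
   q g followers, follower j listing block q + j/g; the alternative A* = 2qt
   and the tail above it are never listed. *)
Section ShortLists.
Variables (R : realType) (m t q g : nat).
Hypotheses (t_gt0 : (0 < t)%N) (q_gt0 : (0 < q)%N) (g_gt0 : (0 < g)%N).
Hypothesis Astar_lt : (2 * q * t < m)%N.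

Definition nA : nat := q * g + q.

Lemma nA_gt0 : (0 < nA)%N.
Proof. by rewrite /nA addn_gt0 q_gt0 orbT. Qed.

Definition is_leader (i : 'I_nA) : bool := (q * g <= i)%N.

Lemma leader_lshift (j : 'I_(q * g)) : is_leader (lshift q j) = false.
Proof. by rewrite /is_leader /= leqNgt ltn_ord. Qed.

Lemma leader_rshift (k : 'I_q) : is_leader (rshift (q * g) k) = true.
Proof. by rewrite /is_leader /= leq_addr. Qed.

Definition block (i : 'I_nA) : nat :=
  if is_leader i then (i - q * g)%N else (q + i %/ g)%N.

Lemma block_lt i : (block i < 2 * q)%N.
Proof.
rewrite /block /is_leader; case: ifP => leader.
  by have := ltn_ord i; rewrite /nA; lia.
have : (i %/ g < q)%N by rewrite ltn_divLR //; lia.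
lia.
Qed.

Definition listA (i : 'I_nA) : seq 'I_m :=
  [seq x : 'I_m <- enum 'I_m | (x %/ t == block i)%N].

Lemma mem_listA i x : (x \in listA i) = (x %/ t == block i)%N.
Proof. by rewrite mem_filter mem_enum andbT. Qed.

Lemma listA_uniq i : uniq (listA i).
Proof. by rewrite filter_uniq ?enum_uniq. Qed.

Lemma size_listA i : size (listA i) = t.
Proof.
rewrite size_filter -(count_map val (fun x => x %/ t == block i)%N) val_enum_ord.
rewrite -(card_ord_count m (fun x => x %/ t == block i)%N) card_block //.
by have := block_lt i; nia.
Qed.

Lemma listA_size_ge i : (t <= size (listA i))%N.
Proof. by rewrite size_listA. Qed.

Definition Astar : 'I_m := Ordinal Astar_lt.

Definition tail_size : nat := (m - (2 * q * t).+1)%N.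

(* After their block, leaders rank A* first and followers rank the tail first. *)
Definition keyA (i : 'I_nA) (x : 'I_m) : nat :=
  if is_leader i then nat_of_bool (x != Astar) else nat_of_bool (~~ (2 * q * t < x)%N).

Definition profileA : full_profile nA m := tier_profile listA keyA.

(* Leaders are indifferent between their block and A*, followers between their
   block and the tail. *)
Definition levelA (i : 'I_nA) : nat := 1%N.

Definition utilA : 'I_nA -> 'I_m -> R := tier_utility R listA keyA levelA.

Lemma top_tiers_leader i x : is_leader i ->
  (x \in top_tiers listA keyA levelA i) = (x \in listA i) || (x == Astar).
Proof.
by move=> leader; rewrite inE /tier /keyA leader; case: (x \in listA i); case: (x == Astar).
Qed.

Lemma top_tiers_follower i x : ~~ is_leader i ->
  (x \in top_tiers listA keyA levelA i) = (x \in listA i) || (2 * q * t < x)%N.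
Proof.
move=> /negbTE follower; rewrite inE /tier /keyA follower.
by case: (x \in listA i); case: (2 * q * t < x)%N.
Qed.

Lemma card_top_tiers_leader i : is_leader i ->
  (t <= #|top_tiers listA keyA levelA i| <= t.+1)%N.
Proof.
move=> leader; have -> : #|top_tiers listA keyA levelA i| =
    #|[predU mem (listA i) & pred1 Astar]|.
  by apply: eq_card => y; rewrite top_tiers_leader.
apply/andP; split.
  rewrite -{1}(size_listA i) -(card_uniqP (listA_uniq i)); apply: subset_leq_card.
  by apply/subsetP => y; rewrite !inE => ->.
have := cardUI (mem (listA i)) (pred1 Astar).
rewrite (card_uniqP (listA_uniq i)) size_listA card1 => card_sum.
by rewrite -addn1 -card_sum leq_addr.
Qed.

Lemma card_top_tiers_follower i : ~~ is_leader i ->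
  (tail_size <= #|top_tiers listA keyA levelA i|)%N.
Proof.
move=> follower; rewrite /tail_size -card_gt //; apply: subset_leq_card.
apply/subsetP => y; rewrite [y \in _]inE => tail_y.
by rewrite top_tiers_follower // tail_y orbT.
Qed.

Lemma utilA_unit_sum : unit_sum utilA.
Proof.
apply: tier_utility_unit_sum => i; exists (nth Astar (listA i) 0).
by rewrite inE /tier mem_nth // size_listA.
Qed.

Lemma utilA_consistent : utility_consistent profileA utilA.
Proof. exact: tier_utility_consistent. Qed.

(* Every leader gives A* at least 1/(t+1), so A* has welfare at least q/(t+1). *)
Lemma SW_Astar : q%:R / t.+1%:R <= SW utilA Astar.
Proof.
rewrite /SW /nA big_split_ord /=.
apply: ler_wpDl; first by apply: sumr_ge0 => j _; exact: tier_utility_ge0.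
have leader_share k : (t.+1%:R)^-1 <= utilA (rshift (q * g) k) Astar.
  have /andP[card_lo card_hi] := card_top_tiers_leader (leader_rshift k).
  rewrite /utilA /tier_utility top_tiers_leader ?leader_rshift // eqxx orbT.
  by rewrite lef_pV2 ?posrE ?ltr0n ?ler_nat // (leq_trans t_gt0 card_lo).
apply: le_trans (ler_sum _ (fun k _ => leader_share k)).
by rewrite sumr_const card_ord mulr_natl.
Qed.

Hypothesis tail_gt0 : (0 < tail_size)%N.

(* Below A*, each agent's utility is at most uniform over her own block, with
   the normalisation t for leaders and at least tail_size for followers. *)
Definition block_share (i : 'I_nA) : R := if is_leader i then t%:R else tail_size%:R.

Lemma utilA_le_share i (x : 'I_m) : (x < 2 * q * t)%N ->
  utilA i x <= (x \in listA i)%:R / block_share i.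
Proof.
move=> x_lt; rewrite /utilA /tier_utility /block_share.
case: ifP => [x_top|_]; last by case: is_leader; rewrite mulr_ge0 ?invr_ge0 ?ler0n.
case: (boolP (is_leader i)) => leader.
  have := x_top; rewrite top_tiers_leader // (_ : (x == Astar) = false) ?orbF; last first.
    by apply/negbTE/eqP => x_A; rewrite x_A /= ltnn in x_lt.
  have /andP[card_lo _] := card_top_tiers_leader leader.
  move=> ->; rewrite mul1r lef_pV2 ?posrE ?ltr0n ?ler_nat //.
  exact: leq_trans t_gt0 card_lo.
have := x_top; rewrite top_tiers_follower // (_ : (2 * q * t < x)%N = false) ?orbF; last by lia.
move=> ->; rewrite mul1r lef_pV2 ?posrE ?ltr0n ?ler_nat ?card_top_tiers_follower //.
exact: leq_trans tail_gt0 (card_top_tiers_follower leader).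
Qed.

(* Welfare bound for any distribution vanishing from A* on: leaders contribute
   the mass on the leaders' blocks divided by t, and the g followers sharing a
   block contribute at most g / tail_size per unit of mass. *)
Lemma expect_utilA_le (p : 'I_m -> R) : (forall x, 0 <= p x) -> \sum_(x < m) p x = 1 ->
  (forall x : 'I_m, (2 * q * t <= x)%N -> p x = 0) ->
  expect p (SW utilA) <=
    (\sum_(x < m) p x * (x %/ t < q)%N%:R) / t%:R + g%:R / tail_size%:R.
Proof.
move=> p_ge0 p_sum p_tail.
pose w i x : R := p x * ((x \in listA i)%:R / block_share i).
have pointwise : expect p (SW utilA) <= \sum_(x < m) \sum_(i < nA) w i x.
  rewrite /expect /SW; apply: ler_sum => x _; rewrite mulr_sumr; apply: ler_sum => i _.
  case: (leqP (2 * q * t) x) => x_lt; first by rewrite /w p_tail // !mul0r.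
  by apply: ler_wpM2l => //; exact: utilA_le_share.
apply: (le_trans pointwise); rewrite exchange_big /= big_split_ord /= addrC.
apply: lerD.
- rewrite (eq_bigr (fun k : 'I_q => \sum_(x < m) p x * (x %/ t == k)%N%:R / t%:R)); last first.
    move=> k _; apply: eq_bigr => x _.
    by rewrite /w mem_listA /block_share /block leader_rshift /= mulrA addKn.
  rewrite exchange_big /= mulr_suml; apply: ler_sum => x _.
  by rewrite -mulr_suml -mulr_sumr sum_nat_indicator.
- rewrite (eq_bigr (fun j : 'I_(q * g) =>
      \sum_(x < m) p x * (x %/ t == q + j %/ g)%N%:R / tail_size%:R)); last first.
    move=> j _; apply: eq_bigr => x _.
    by rewrite /w mem_listA /block_share /block leader_lshift /= mulrA.
  rewrite exchange_big /=.
  apply: (le_trans (y := \sum_(x < m) p x * g%:R / tail_size%:R)); last first.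
    by rewrite -mulr_suml -mulr_suml p_sum mul1r.
  apply: ler_sum => x _; rewrite -mulr_suml -mulr_sumr.
  apply: ler_wpM2r; first by rewrite invr_ge0 ler0n.
  apply: ler_wpM2l => //; rewrite sum_indicator ler_nat.
  apply: leq_trans (card_block_le (q * g) (x %/ t - q)%N g_gt0).
  apply: subset_leq_card; apply/subsetP => j; rewrite !inE => /eqP ->.
  by rewrite addKn.
Qed.

(* Metric 1: unlisted alternatives (from A* on) form a cluster containing no
   agent.  Listed alternatives then have social cost 0 and unlisted ones have
   cost nA, so finite metric distortion forbids any mass on the latter. *)
Definition unlisted (x : 'I_m) : bool := ~~ (x %/ t < 2 * q)%N.

Lemma listA_unlisted i x : x \in listA i -> unlisted x = false.
Proof. by rewrite mem_listA /unlisted => /eqP ->; rewrite block_lt. Qed.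

Lemma rule_ignores_unlisted (f : rule R m) C : is_rule t f -> metric_distortion_le t f C ->
  forall x : 'I_m, (2 * q * t <= x)%N -> f nA (top_profile t profileA) x = 0.
Proof.
move=> f_rule f_dist x x_unlisted.
have m_gt0 : (0 < m)%N by lia.
pose d := cluster_metric R (fun _ : 'I_nA => false) unlisted.
have := f_dist nA _ d (cluster_metric_pseudometric _ _ _)
  (cluster_metric_consistent R listA_unlisted) (Ordinal m_gt0).
rewrite (top_tier_profile _ keyA listA_uniq listA_size_ge) => expect_le.
apply: (zero_cost_support _ _ expect_le).
- exact: (f_rule _ _).1.
- by move=> y; apply: sumr_ge0 => i _; rewrite ler0n.
- by rewrite SC_cluster_metric big1 // => i _; rewrite /unlisted /= div0n muln_gt0 q_gt0.
rewrite SC_cluster_metric (eq_bigr (fun _ => 1)) ?sumr_const ?card_ord ?ltr0n ?nA_gt0 //.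
by move=> i _; rewrite /unlisted /= -leqNgt leq_divRL // x_unlisted.
Qed.

(* Metric 2: the leaders and their blocks form one cluster.  A* costs q,
   while each alternative of a leader block costs at least q g (the
   followers), so the rule puts mass at most C / g on the leader blocks. *)
Definition leader_block (x : 'I_m) : bool := (x %/ t < q)%N.

Lemma listA_leader_block i x : x \in listA i -> leader_block x = is_leader i.
Proof.
rewrite mem_listA /leader_block /block => /eqP ->; case: ifP => leader.
  by have := ltn_ord i; rewrite /nA /is_leader in leader *; lia.
by rewrite ltnNge leq_addr.
Qed.

Lemma rule_leader_mass (f : rule R m) C : is_rule t f -> metric_distortion_le t f C ->
  g%:R * (\sum_(x < m) f nA (top_profile t profileA) x * (leader_block x)%:R)
  <= Num.max C 1.
Proof.
move=> f_rule f_dist.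
pose d := cluster_metric R is_leader leader_block.
have := f_dist nA _ d (cluster_metric_pseudometric _ _ _)
  (cluster_metric_consistent R listA_leader_block) Astar.
rewrite (top_tier_profile _ keyA listA_uniq listA_size_ge).
set p := f nA _ => expect_le.
have p_ge0 : forall y, 0 <= p y by exact: (f_rule _ _).1.
have SC_Astar : SC d Astar = q%:R.
  rewrite SC_cluster_metric /nA big_split_ord /=.
  have -> : leader_block Astar = false.
    by rewrite /leader_block /Astar /= mulnK // ltnNge leq_pmull.
  rewrite big1 ?add0r; last by move=> j _; rewrite leader_lshift.
  by rewrite (eq_bigr (fun _ => 1)) ?sumr_const ?card_ord // => k _; rewrite leader_rshift.
have SC_ge x : (q * g)%:R * (leader_block x)%:R <= SC d x.
  rewrite SC_cluster_metric /nA big_split_ord /=.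
  apply: ler_wpDr; first by apply: sumr_ge0 => k _; rewrite ler0n.
  rewrite (eq_bigr (fun _ => (leader_block x)%:R)) ?sumr_const ?card_ord ?mulr_natl //.
  by move=> j _; rewrite leader_lshift; case: (leader_block x).
have q_gt0' : 0 < (q%:R : R) by rewrite ltr0n.
have mass_le : (q * g)%:R * (\sum_(x < m) p x * (leader_block x)%:R) <= expect p (SC d).
  rewrite /expect mulr_sumr; apply: ler_sum => y _.
  by rewrite mulrA (mulrC _ (p y)) -mulrA ler_wpM2l.
set mass := \sum_(x < m) _ in mass_le *.
rewrite -(ler_pM2r q_gt0').
have -> : g%:R * mass * q%:R = (q * g)%:R * mass by rewrite natrM; ring.
apply: le_trans (le_trans mass_le expect_le) _.
by rewrite SC_Astar ler_wpM2r ?ler0n // le_max lexx.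
Qed.

Lemma rule_expect_utilA (f : rule R m) C : is_rule t f -> metric_distortion_le t f C ->
  expect (f nA (top_profile t profileA)) (SW utilA)
  <= Num.max C 1 / (g%:R * t%:R) + g%:R / tail_size%:R.
Proof.
move=> f_rule f_dist.
have := expect_utilA_le (f_rule _ _).1 (f_rule _ _).2 (rule_ignores_unlisted f_rule f_dist).
move/le_trans; apply; rewrite lerD2r.
have := rule_leader_mass f_rule f_dist; rewrite /leader_block.
set mass := \sum_(x < m) _ => mass_le.
have g_neq0 : (g%:R : R) != 0 by rewrite pnatr_eq0 -lt0n.
have t_neq0 : (t%:R : R) != 0 by rewrite pnatr_eq0 -lt0n.
have -> : mass / t%:R = (g%:R * mass) / (g%:R * t%:R) by field; rewrite t_neq0 g_neq0.
by apply: ler_wpM2r => //; rewrite invr_ge0 mulr_ge0 ?ler0n.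
Qed.

End ShortLists.

Lemma light_alternative (R : realType) k m (h : 'I_k -> 'I_m) (p : 'I_m -> R) :
  (0 < k)%N -> injective h -> (forall x, 0 <= p x) -> \sum_(x < m) p x = 1 ->
  exists j, k%:R * p (h j) <= 1.
Proof.
move=> k_gt0 h_inj p_ge0 p_sum.
have sum_le : \sum_(j < k) p (h j) <= 1 by rewrite -p_sum sum_injective_le.
case: (boolP [exists j, k%:R * p (h j) <= 1]) => [/existsP//|/existsPn heavy].
have : \sum_(j < k) (1 : R) < \sum_(j < k) k%:R * p (h j).
  apply: ltr_sum; first by apply/hasP; exists (Ordinal k_gt0); rewrite ?mem_index_enum.
  by move=> j _; rewrite ltNge heavy.
rewrite sumr_const card_ord -mulr_sumr -[1 *+ k]mulr_natl mulr1.
have := ler_wpM2l (ler0n R k) sum_le; rewrite mulr1; lra.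
Qed.

(* The instance defeating every rule: k^2 agents with distinct favourites,
   split into k groups of k, group j having a representative alternative.
   The top lists are empty, so the rule sees nothing.  Once the rule has
   committed, the members of a group j0 whose representative has probability
   at most 1/k give it utility 1/2: welfare k/2 against an expected 3/2. *)
Section EmptyLists.
Variables (R : realType) (m k : nat).
Hypotheses (k_gt0 : (0 < k)%N) (k_fits : (k * k + k <= m)%N).

Definition nB : nat := k * k.

Lemma favourite_lt (i : 'I_nB) : (i < m)%N.
Proof. exact: leq_trans (ltn_ord i) (leq_trans (leq_addr k _) k_fits). Qed.

Lemma representative_lt (j : 'I_k) : (k * k + j < m)%N.
Proof. by apply: leq_trans k_fits; rewrite ltn_add2l. Qed.

Definition favourite (i : 'I_nB) : 'I_m := Ordinal (favourite_lt i).
Definition representative (j : 'I_k) : 'I_m := Ordinal (representative_lt j).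

Lemma favourite_neq_representative i j : (favourite i == representative j) = false.
Proof. by apply/negbTE/eqP => /(congr1 val) /=; have := ltn_ord i; rewrite /nB; lia. Qed.

Lemma representative_inj : injective representative.
Proof. by move=> j1 j2 /(congr1 val) /= /eqP; rewrite eqn_add2l => /eqP /val_inj. Qed.

(* Each agent ranks her favourite, then her group's representative. *)
Definition keyB (i : 'I_nB) (x : 'I_m) : nat :=
  (if x == favourite i then 0 else if val x == k * k + i %/ k then 1 else 2)%N.

Definition profileB : full_profile nB m := tier_profile (fun _ => [::]) keyB.

Variable j0 : 'I_k.

Definition in_group (i : 'I_nB) : bool := (i %/ k == j0)%N.

Lemma card_group : #|in_group| = k.
Proof. exact: card_block (nB) k j0 k_gt0 ltac:(by rewrite leq_mul2r ltn_ord orbT). Qed.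

Definition levelB (i : 'I_nB) : nat := (if in_group i then 2 else 1)%N.

Definition utilB : 'I_nB -> 'I_m -> R := tier_utility R (fun _ => [::]) keyB levelB.

Lemma top_tiers_B i x : (x \in top_tiers (fun _ => [::]) keyB levelB i) =
  (x == favourite i) || in_group i && (x == representative j0).
Proof.
rewrite inE /tier in_nil /keyB /levelB.
case: (boolP (in_group i)) => [group|_]; case: (x == favourite i) => //=.
  have -> : (x == representative j0) = (x == k * k + i %/ k :> nat)%N.
    by rewrite (eqP group).
  by case: ifP.
by case: ifP.
Qed.

Lemma card_top_tiers_B i :
  #|top_tiers (fun _ => [::]) keyB levelB i| = (if in_group i then 2 else 1)%N.
Proof.
case: (boolP (in_group i)) => group.
  have -> : 2%N = #|[set favourite i; representative j0]|.
    by rewrite cards2 favourite_neq_representative.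
  by apply: eq_card => x; rewrite top_tiers_B group !inE.
rewrite -(card1 (favourite i)); apply: eq_card => x.
by rewrite top_tiers_B (negbTE group) orbF !inE.
Qed.

Lemma utilB_le i x : utilB i x <=
  (x == favourite i)%:R + (in_group i && (x == representative j0))%:R / 2%:R.
Proof.
rewrite /utilB /tier_utility card_top_tiers_B top_tiers_B.
case: (in_group i); case: (x == favourite i); case: (x == representative j0);
  rewrite /= ?invr1 ?mul0r ?addr0 ?add0r //; lra.
Qed.

Lemma utilB_representative i : in_group i -> 1 / 2%:R <= utilB i (representative j0).
Proof.
move=> group; rewrite /utilB /tier_utility card_top_tiers_B top_tiers_B group.
by rewrite eqxx orbT mul1r.
Qed.

Lemma utilB_unit_sum : unit_sum utilB.
Proof.
by apply: tier_utility_unit_sum => i; exists (favourite i); rewrite top_tiers_B eqxx.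
Qed.

Lemma utilB_consistent : utility_consistent profileB utilB.
Proof. exact: tier_utility_consistent. Qed.

(* If the representative of group j0 has probability at most 1/k, the
   favourites contribute at most 1 and the group at most k * (1/k) / 2. *)
Lemma expect_utilB_le (p : 'I_m -> R) : (forall x, 0 <= p x) -> \sum_(x < m) p x = 1 ->
  k%:R * p (representative j0) <= 1 -> expect p (SW utilB) <= 3%:R / 2%:R.
Proof.
move=> p_ge0 p_sum light.
have pointwise i x : p x * utilB i x <=
    p x * (x == favourite i)%:R + (in_group i)%:R / 2%:R * (p x * (x == representative j0)%:R).
  apply: le_trans (ler_wpM2l (p_ge0 x) (utilB_le i x)) _; rewrite le_eqVlt; apply/orP; left.
  by apply/eqP; case: (in_group i); case: (x == favourite i);
    case: (x == representative j0); rewrite /=; ring.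
have favourites_le : \sum_(i < nB) p (favourite i) <= 1.
  by rewrite -p_sum sum_injective_le // => i1 i2 /(congr1 val) /= /val_inj.
apply: (le_trans (y := \sum_(i < nB) (p (favourite i) +
    (in_group i)%:R / 2%:R * p (representative j0)))).
  rewrite /expect /SW; under eq_bigr do rewrite mulr_sumr.
  rewrite exchange_big /=.
  apply: ler_sum => i _; apply: le_trans (ler_sum _ (fun x _ => pointwise i x)) _.
  by rewrite big_split /= -mulr_sumr !sum_point_mass.
rewrite big_split /= -mulr_suml -mulr_suml sum_indicator card_group.
have -> : (3%:R / 2%:R : R) = 1 + 1 / 2%:R by field.
apply: lerD => //; rewrite mulrAC ler_wpM2r //.
by rewrite invr_ge0 ler0n.
Qed.

Lemma SW_representative : k%:R / 2%:R <= SW utilB (representative j0).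
Proof.
apply: (le_trans (y := \sum_(i < nB) (in_group i)%:R * (1 / 2%:R))).
  by rewrite -mulr_suml sum_indicator card_group mul1r.
apply: ler_sum => i _; case: (boolP (in_group i)) => group.
  by rewrite mul1r utilB_representative.
by rewrite mul0r tier_utility_ge0.
Qed.

End EmptyLists.

(* Lower bounds on the distortion can be weakened, welfare being nonnegative. *)
Lemma util_distortion_ge_weaken (R : realType) m t (f : rule R m) (D D' : R) :
  is_rule t f -> D' <= D -> util_distortion_ge t f D -> util_distortion_ge t f D'.
Proof.
move=> f_rule D'_le [n [s [u [n_gt0 [u_unit [u_cons [X DE_le]]]]]]].
exists n, s, u; do 3!split => //; exists X; apply: le_trans DE_le.
apply: ler_wpM2r => //; apply: expect_SW_ge0; first exact: (f_rule _ _).1.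
exact: u_unit.1.
Qed.

Section Arithmetic.
Variable R : realType.

Lemma sqrtr_le_sq (x y : R) : 0 <= y -> x <= y ^+ 2 -> Num.sqrt x <= y.
Proof.
move=> y_ge0 x_le; rewrite -(ger0_norm y_ge0) -sqrtr_sqr.
exact: ler_wsqrtr.
Qed.

Lemma sqrt_le_ratio (m t : nat) : (0 < m)%N -> (0 < t)%N ->
  (Num.sqrt (m%:R : R) <= m%:R * Num.sqrt m%:R / (t%:R * Num.sqrt t%:R))
  = (t * t * t <= m * m)%N.
Proof.
move=> m_gt0 t_gt0.
have sm_gt0 : 0 < Num.sqrt (m%:R : R) by rewrite sqrtr_gt0 ltr0n.
have st_gt0 : 0 < Num.sqrt (t%:R : R) by rewrite sqrtr_gt0 ltr0n.
have tst_gt0 : 0 < t%:R * Num.sqrt (t%:R : R) by rewrite mulr_gt0 ?ltr0n.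
rewrite ler_pdivlMr // mulrC ler_pM2r // -(ler_pXn2r (isT : 0 < 2)%N) ?nnegrE;
  rewrite ?mulr_ge0 ?ler0n ?sqrtr_ge0 //.
by rewrite exprMn sqr_sqrtr ?ler0n // -!natrX -natrM ler_nat !expnS expn0; lia.
Qed.

(* With g = floor(sqrt(m/t)), the ratio m sqrt m / (t sqrt t) is at most
   (m/t) (g + 1). *)
Lemma ratio_le (M T G : R) : 0 < M -> 0 < T -> 0 <= G -> M <= (G + 1) ^+ 2 * T ->
  M * Num.sqrt M / (T * Num.sqrt T) <= M / T * (G + 1).
Proof.
move=> M_gt0 T_gt0 G_ge0 M_le.
have sT_gt0 : 0 < Num.sqrt T by rewrite sqrtr_gt0.
have sM_le : Num.sqrt M <= (G + 1) * Num.sqrt T.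
  rewrite -(sqr_sqrtr (ltW T_gt0)) in M_le.
  apply: sqrtr_le_sq; last by rewrite exprMn.
  by rewrite mulr_ge0 ?sqrtr_ge0 ?addr_ge0.
rewrite ler_pdivrMr ?mulr_gt0 //.
have -> : M / T * (G + 1) * (T * Num.sqrt T) = M * ((G + 1) * Num.sqrt T).
  by field; rewrite gt_eqF.
by rewrite ler_pM2l.
Qed.

Definition short_list_const (C' : R) : R := (16%:R * (2%:R * C' + 8%:R))^-1.

Lemma short_list_const_gt0 (C' : R) : 1 <= C' -> 0 < short_list_const C'.
Proof. by move=> C'_ge1; rewrite invr_gt0; lra. Qed.

(* The real inequality behind the short-list regime: with E the expected
   welfare, M <= 8QT (Q ~ M/(4T)) and M <= 4D (D the tail size). *)
Lemma short_list_arith (C' M T G Q D E : R) :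
  1 <= C' -> 1 <= T -> 1 <= G -> 1 <= Q -> G * G * T <= M -> M <= 8%:R * Q * T ->
  M <= 4%:R * D -> 0 <= E -> E <= C' / (G * T) + G / D ->
  short_list_const C' * (M / T * (G + 1)) * E <= Q / (T + 1).
Proof.
move=> C'_ge1 T_ge1 G_ge1 Q_ge1 GGT_le M_le_Q M_le_D E_ge0 E_le.
have T_gt0 : 0 < T by lra.
have G_gt0 : 0 < G by lra.
have D_gt0 : 0 < D by nra.
have M_gt0 : 0 < M by nra.
have EG_le : E * (G + 1) <= (2%:R * C' + 8%:R) / T.
  apply: le_trans (ler_wpM2l E_ge0 (_ : G + 1 <= 2%:R * G)) _; first lra.
  apply: le_trans (ler_wpM2r (ltW (mulr_gt0 _ G_gt0)) E_le) _; first lra.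
  have -> : (C' / (G * T) + G / D) * (2%:R * G) = 2%:R * C' / T + 2%:R * G * G / D.
    by field; rewrite !gt_eqF.
  have -> : (2%:R * C' + 8%:R) / T = 2%:R * C' / T + 8%:R / T by field; rewrite gt_eqF.
  rewrite lerD2l ler_pdivrMr // [X in _ <= X]mulrAC ler_pdivlMr //; nra.
have -> : short_list_const C' * (M / T * (G + 1)) * E
    = short_list_const C' * (M / T) * (E * (G + 1)) by ring.
rewrite /short_list_const.
apply: le_trans (ler_wpM2l _ EG_le) _.
  by apply: mulr_ge0; [rewrite invr_ge0; lra | apply: divr_ge0; lra].
have -> : (16%:R * (2%:R * C' + 8%:R))^-1 * (M / T) * ((2%:R * C' + 8%:R) / T)
    = M / (16%:R * T * T) by field; apply/andP; split; rewrite gt_eqF //; lra.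
rewrite ler_pdivrMr; last by nra.
rewrite mulrAC ler_pdivlMr; last by lra.
nra.
Qed.

End Arithmetic.

(* Parameters of the short-list instance: q = m / (4t) leaders and
   g = floor(sqrt(m/t)) followers per leader block; A* and a tail of length
   about m/2 fit after the 2q blocks. *)
Lemma short_list_parameters m t : (64 <= m)%N -> (0 < t)%N -> (t * t * t <= m * m)%N ->
  exists q g, [/\ (0 < q)%N, (0 < g)%N, (2 * q * t < m)%N & [/\ (g * g * t <= m)%N,
    (m < g.+1 * g.+1 * t)%N, (m <= 8 * q * t)%N & (m <= 4 * tail_size m t q)%N]].
Proof.
move=> m_ge t_gt0 t3_le.
have t4_le : (4 * t <= m)%N.
  by rewrite leqNgt; apply/negP => m_lt; have : (m * m * m < 64 * (m * m))%N; nia.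
set q := (m %/ (4 * t))%N.
have q_lo : (q * (4 * t) <= m)%N := leq_divM m (4 * t).
have q_hi : (m < q.+1 * (4 * t))%N by apply: ltn_ceil; lia.
have q_gt0 : (0 < q)%N by rewrite divn_gt0 //; lia.
have [g /andP[g_lo g_hi]] := floor_sqrt_div m t_gt0.
have g_gt0 : (0 < g)%N by rewrite lt0n; apply/eqP => g0; rewrite g0 in g_hi; lia.
by exists q, g; split; rewrite ?g_lo ?g_hi //; [nia | split; rewrite /tail_size //; nia].
Qed.

Lemma distortion_short_lists (R : realType) m t (C : R) (f : rule R m) :
  (64 <= m)%N -> (0 < t)%N -> (t * t * t <= m * m)%N ->
  is_rule t f -> metric_distortion_le t f C ->
  util_distortion_ge t f (short_list_const (Num.max C 1) *
    (m%:R * Num.sqrt m%:R / (t%:R * Num.sqrt t%:R))).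
Proof.
move=> m_ge t_gt0 t3_le f_rule f_dist.
have [q [g [q_gt0 g_gt0 Astar_lt [g_lo g_hi m_le_q m_le_tail]]]] :=
  short_list_parameters m_ge t_gt0 t3_le.
have tail_gt0 : (0 < tail_size m t q)%N by lia.
have u_unit := utilA_unit_sum R t_gt0 q_gt0 g_gt0 Astar_lt.
exists (nA q g), (profileA g Astar_lt), (utilA R Astar_lt).
split; first exact: nA_gt0.
split; first exact: u_unit.
split; first exact: utilA_consistent.
exists (Astar Astar_lt); apply: le_trans (SW_Astar R t_gt0 q_gt0 g_gt0 Astar_lt); rewrite -natr1.
have E_le := rule_expect_utilA t_gt0 q_gt0 g_gt0 Astar_lt tail_gt0 f_rule f_dist.
have E_ge0 := expect_SW_ge0 (f_rule _ (profileA g Astar_lt)).1 u_unit.1.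
have C'_ge1 : 1 <= Num.max C 1 by rewrite le_max lexx orbT.
have T_ge1 : 1 <= t%:R :> R by rewrite ler1n.
have G_ge1 : 1 <= g%:R :> R by rewrite ler1n.
have Q_ge1 : 1 <= q%:R :> R by rewrite ler1n.
have GGT_le : g%:R * g%:R * t%:R <= m%:R :> R by rewrite -!natrM ler_nat.
have M_le_Q : m%:R <= 8%:R * q%:R * t%:R :> R by rewrite -!natrM ler_nat.
have M_le_D : m%:R <= 4%:R * (tail_size m t q)%:R :> R by rewrite -natrM ler_nat.
have := short_list_arith C'_ge1 T_ge1 G_ge1 Q_ge1 GGT_le M_le_Q M_le_D E_ge0 E_le.
apply: le_trans; apply: ler_wpM2r => //.
apply: ler_wpM2l; first exact: ltW (short_list_const_gt0 C'_ge1).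
apply: ratio_le; rewrite ?ltr0n ?ler0n //; first lia.
by rewrite natr1 -natrX -natrM ler_nat ltnW // expnS expn1.
Qed.

Lemma distortion_any_rule (R : realType) m t (f : rule R m) :
  (4 <= m)%N -> is_rule t f -> util_distortion_ge t f (Num.sqrt m%:R / 12%:R).
Proof.
move=> m_ge f_rule.
have [k /andP[k_lo k_hi]] := @floor_sqrt_div 4 m isT.
have k_gt0 : (0 < k)%N by rewrite lt0n; apply/eqP => k0; rewrite k0 in k_hi; lia.
have k_fits : (k * k + k <= m)%N by nia.
have [p_ge0 p_sum] := f_rule _ (profileB k_fits).
have [j0 light] := light_alternative k_gt0 (@representative_inj _ _ k_fits) p_ge0 p_sum.
exists (nB k), (profileB k_fits), (utilB R k_fits j0).
split; first by rewrite muln_gt0 k_gt0.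
split; first exact: utilB_unit_sum.
split; first exact: utilB_consistent.
exists (representative k_fits j0); apply: le_trans (SW_representative R k_gt0 k_fits j0).
have E_le := expect_utilB_le k_gt0 p_ge0 p_sum light.
have E_ge0 := expect_SW_ge0 p_ge0 (utilB_unit_sum R k_fits j0).1.
have sqrt_le : Num.sqrt (m%:R : R) <= 4%:R * k%:R.
  apply: sqrtr_le_sq; first by rewrite mulr_ge0 ?ler0n.
  by rewrite -natrM -natrX ler_nat expnS expn1; nia.
apply: le_trans (ler_wpM2l _ E_le) _.
  by rewrite divr_ge0 ?sqrtr_ge0 ?ler0n.
apply: le_trans (ler_wpM2r _ (ler_wpM2r _ sqrt_le)) _; rewrite ?invr_ge0 ?ler0n //.
  lra.
lra.
Qed.

Theorem mainTheorem11 (R : realType) (C : R) :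
  exists c : R, 0 < c /\ exists m0 : nat,
    forall (m t : nat), (m0 <= m)%N -> (1 <= t <= m)%N ->
    forall f : rule R m, is_rule t f -> metric_distortion_le t f C ->
      util_distortion_ge t f
        (c * Num.max (m%:R * Num.sqrt (m%:R) / (t%:R * Num.sqrt (t%:R)))
                     (Num.sqrt (m%:R))).
Proof.
have C'_ge1 : 1 <= Num.max C 1 by rewrite le_max lexx orbT.
exists (short_list_const (Num.max C 1)); split; first exact: short_list_const_gt0.
exists 64%N => m t m_ge /andP[t_gt0 _] f f_rule f_dist.
have [t3_le | t3_gt] := leqP (t * t * t) (m * m).
  rewrite [X in _ * X]max_l ?sqrt_le_ratio //; last by lia.
  exact: distortion_short_lists.
rewrite [X in _ * X]max_r; last by rewrite ltW // ltNge sqrt_le_ratio // -?ltnNge //; lia.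
have m_ge4 : (4 <= m)%N by lia.
apply: util_distortion_ge_weaken f_rule _ (distortion_any_rule m_ge4 f_rule).
rewrite mulrC ler_wpM2l ?sqrtr_ge0 // /short_list_const lef_pV2 ?posrE; lra.
Qed.
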